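(* The set $\mathcal{P}_{\mathrm{fin}}(I)$ of finite subsets of $I$ is a quantifier-free definable subset of the structure $\mathcal{L}(I)$.
   Context: Let $I$ be a dense linear order with left endpoint $0$ and no right endpoint. Let $\mathcal{P}_{\mathrm{fci}}(I)$ be the set of finite unions of closed intervals $[i,j]$, $[i,+\infty)$, $(-\infty,j]$ of $I$. $\mathcal{L}(I)$ is the structure with universe $\mathcal{P}_{\mathrm{fci}}(I)$ in the signature $\{\cup,\cap,\bot,c_0,\min,\max,l,r\}$, interpreted as follows. - $\cup$ and $\cap$ are union and intersection. - $\bot$ is $\emptyset$, and $c_0$ is $\{0\}$. - $\min(A)$ is the singleton of the least element of $A$, with $\min(\emptyset)=\emptyset$. - $\max(A)$ is the singleton of the greatest element when $A$ is nonempty and bounded, and $\emptyset$ otherwise. - $l(A)$ and $r(A)$ are the sets of left and right endpoints of $A$. Left endpoints are the minima of the maximal closed intervals composing $A$. Right endpoints are the maxima of the bounded ones. *)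

From HB Require Import structures.
From mathcomp Require Import all_boot all_order.
From mathcomp Require Import boolp classical_sets cardinality.
Set Implicit Arguments. Unset Strict Implicit. Unset Printing Implicit Defensive.
Import Order.TTheory.
Local Open Scope classical_set_scope.
Local Open Scope order_scope.

Section LI.
Context {d : Order.disp_t} {T : orderType d}.

Definition dlo_left_endpoint (z0 : T) : Prop :=
  [/\ (forall x y : T, x < y -> exists z, x < z /\ z < y),
      (forall x : T, z0 <= x) &
      (forall x : T, exists y, x < y)].

Definition is_cint (J : set T) : Prop :=
  (exists i j, i <= j /\ J = [set x | i <= x /\ x <= j]) \/
  (exists i, J = [set x | i <= x]) \/
  (exists j, J = [set x | x <= j]).

Definition is_fci (A : set T) : Prop :=
  exists (n : nat) (F : nat -> set T),
    (forall k, (k < n)%N -> is_cint (F k)) /\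
    A = \bigcup_(k in [set k | (k < n)%N]) F k.

Definition least (A : set T) (x : T) : Prop := A x /\ forall y, A y -> x <= y.
Definition greatest (A : set T) (x : T) : Prop := A x /\ forall y, A y -> y <= x.

Definition Lmin (A : set T) : set T := [set x | least A x].
Definition Lmax (A : set T) : set T := [set x | greatest A x].

Definition max_cint (A J : set T) : Prop :=
  is_cint J /\ J `<=` A /\ (forall K, is_cint K -> J `<=` K -> K `<=` A -> K = J).

Definition Lleft (A : set T) : set T :=
  [set x | exists J, max_cint A J /\ least J x].
Definition Lright (A : set T) : set T :=
  [set x | exists J, max_cint A J /\ greatest J x].

End LI.

Inductive lterm : Type :=
| TVar
| TBot
| TC0
| TCup of lterm & lterm
| TCap of lterm & lterm
| TMin of lterm
| TMax of lterm
| TL of lterm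
| TR of lterm.

Inductive qf_formula : Type :=
| FTrue
| FEq of lterm & lterm
| FNot of qf_formula
| FAnd of qf_formula & qf_formula
| FOr of qf_formula & qf_formula.

Section Sem.
Context {d : Order.disp_t} {T : orderType d} (z0 : T).

Fixpoint eval_term (t : lterm) (A : set T) : set T :=
  match t with
  | TVar => A
  | TBot => set0
  | TC0 => [set z0]
  | TCup t1 t2 => eval_term t1 A `|` eval_term t2 A
  | TCap t1 t2 => eval_term t1 A `&` eval_term t2 A
  | TMin t1 => Lmin (eval_term t1 A)
  | TMax t1 => Lmax (eval_term t1 A)
  | TL t1 => Lleft (eval_term t1 A)
  | TR t1 => Lright (eval_term t1 A)
  end.

Fixpoint holds (f : qf_formula) (A : set T) : Prop :=
  match f with
  | FTrue => True
  | FEq t1 t2 => eval_term t1 A = eval_term t2 A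
  | FNot g => ~ holds g A
  | FAnd g h => holds g A /\ holds h A
  | FOr g h => holds g A \/ holds h A
  end.
End Sem.

(* In a dense order a finite union of closed intervals is finite exactly when
   it contains no nondegenerate segment [i, j], i.e. when all its components
   are points; so the formula A = l(A) defines the finite sets.  A finite set
   misses a point of every nondegenerate segment, hence each of its points is a
   maximal interval [x, x] and a left endpoint.  Conversely, if A = l(A) and
   [i, j] is contained in A, pick y strictly between i and j: y is the least
   element of a maximal interval J of A, and J together with [i, y] is a larger
   closed interval inside A, contradicting maximality. *)
From mathcomp Require Import all_boot all_order.
From mathcomp Require Import boolp classical_sets cardinality.
Import Order.TTheory.
Local Open Scope classical_set_scope.
Local Open Scope order_scope.

Section Segments.
Context {d : Order.disp_t} {T : orderType d}.

Definition seg (i j : T) : set T := [set x | i <= x /\ x <= j].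

Definition seg_free (A : set T) : Prop := forall i j, i < j -> ~ seg i j `<=` A.

Lemma subset1_finite (K : set T) : is_subset1 K -> finite_set K.
Proof.
move=> K1; have [[x Kx]|/set0P/negP/negbNE/eqP->] := pselect (K !=set0).
  by apply: (sub_finite_set _ (finite_set1 x)) => y Ky; exact: K1.
exact: finite_set0.
Qed.

Lemma is_cint_seg_sub {K : set T} {p q : T} :
  is_cint K -> K p -> K q -> seg p q `<=` K.
Proof.
case=> [[i [j [_ ->]]]|[[i ->]|[j ->]]] /= Kp Kq t [pt tq].
- by case: Kp Kq => [ip _] [_ qj]; split; [apply: le_trans pt | apply: le_trans qj].
- exact: le_trans pt.
- exact: le_trans Kq.
Qed.

Lemma is_cint_setU_seg (J : set T) i y :
  is_cint J -> J y -> i <= y -> is_cint (J `|` seg i y).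
Proof.
case=> [[a [b [ab ->]]]|[[a ->]|[b ->]]] /= Jy iy.
- left; exists (Order.min a i), b; split; first by rewrite ge_min ab.
  apply/seteqP; split => x /=.
    case=> [[ax xb]|[ix xy]]; first by rewrite ge_min ax.
    by rewrite ge_min ix orbT; split=> //; apply: le_trans Jy.2.
  rewrite ge_min => -[/orP[ax|ix] xb]; first by left.
  have [ax|xa] := leP a x; first by left.
  by right; split=> //; apply: le_trans (ltW xa) Jy.1.
- right; left; exists (Order.min a i); apply/seteqP; split => x /=.
    by case=> [ax|[ix _]]; rewrite ge_min ?ax ?ix ?orbT.
  rewrite ge_min => /orP[ax|ix]; first by left.
  have [ax|xa] := leP a x; first by left.
  by right; split=> //; apply: le_trans (ltW xa) Jy.
- right; right; exists b; apply/seteqP; split => x /=; last by left.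
  by case=> // -[_ xy]; apply: le_trans Jy.
Qed.

Lemma seg_free_cint_subset1 {A K : set T} :
  seg_free A -> is_cint K -> K `<=` A -> is_subset1 K.
Proof.
move=> Afree cK KA x y Kx Ky.
have noseg p q : K p -> K q -> ~ p < q.
  by move=> Kp Kq pq; apply: (Afree p q pq) => t /(is_cint_seg_sub cK Kp Kq) /KA.
by apply/eqP; rewrite eq_le !leNgt; apply/andP; split; apply/negP; apply: noseg.
Qed.

Lemma fci_seg_free_finite {A : set T} : is_fci A -> seg_free A -> finite_set A.
Proof.
move=> [n [F [Fc ->]]] Afree; apply: bigcup_finite => [|k kn]; first exact: finite_II.
apply/subset1_finite; apply: (seg_free_cint_subset1 Afree (Fc k kn)).
by move=> x Fx; exists k.
Qed.

Lemma Lleft_sub (A : set T) : Lleft A `<=` A.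
Proof. by move=> x [J [[_ [JA _]] [Jx _]]]; exact: JA. Qed.

Lemma seg_free_max_cint (A : set T) x :
  seg_free A -> A x -> max_cint A (seg x x).
Proof.
move=> Afree Ax; have xx : seg x x x by split.
have seg_xx y : seg x x y -> y = x by move=> [xy yx]; apply/eqP; rewrite eq_le yx xy.
split; first by left; exists x, x.
split; first by move=> y /seg_xx ->.
move=> K cK xK KA; apply/seteqP; split => [y Ky|]; last exact: xK.
suff -> : y = x by [].
exact: (seg_free_cint_subset1 Afree cK KA y x Ky (xK x xx)).
Qed.

Lemma seg_free_Lleft {A : set T} : seg_free A -> Lleft A = A.
Proof.
move=> Afree; apply/seteqP; split; first exact: Lleft_sub.
move=> x Ax; exists (seg x x); split; first exact: seg_free_max_cint.
by split=> [|y []].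
Qed.

Section Dense.
Hypothesis dense : forall x y : T, x < y -> exists z, x < z /\ z < y.

Lemma dense_seg_notin (s : seq T) {p q : T} :
  p < q -> exists x, [/\ p < x, x <= q & x \notin s].
Proof.
elim: s p q => [|a s IH] p q pq; first by exists q; rewrite pq lexx.
have [/andP[pa aq]|na] := boolP ((p < a) && (a <= q)).
  have [y [py ya]] := dense _ _ pa.
  have [x [px xy xs]] := IH _ _ py.
  have xa := le_lt_trans xy ya.
  exists x; split => //; first exact: le_trans (ltW xa) aq.
  by rewrite in_cons negb_or xs andbT; apply: contraTneq xa => ->; rewrite ltxx.
have [x [px xq xs]] := IH _ _ pq.
exists x; split => //; rewrite in_cons negb_or xs andbT.
by apply: contraNneq na => <-; rewrite px xq.
Qed.

Lemma finite_seg_free {A : set T} : finite_set A -> seg_free A.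
Proof.
move=> /finite_seqP [s ->] p q pq sub.
have [x [px xq xs]] := dense_seg_notin s pq.
have : [set` s] x by apply: sub; split=> //; apply: ltW.
by rewrite /= (negbTE xs).
Qed.

Lemma Lleft_id_seg_free {A : set T} : Lleft A = A -> seg_free A.
Proof.
move=> AL i j ij sub; have [y [iy yj]] := dense _ _ ij.
have [J [[cJ [JA Jmax]] [Jy Jleast]]] : Lleft A y.
  by rewrite AL; apply: sub; split; apply: ltW.
have iyA : seg i y `<=` A.
  by move=> x [ix xy]; apply: sub; split=> //; apply: le_trans (ltW yj).
have JiJ : J `|` seg i y = J.
  apply: Jmax; first exact: is_cint_setU_seg (ltW iy).
    exact: subsetUl.
  by move=> x [/JA|/iyA].
have Ji : J i by rewrite -JiJ; right; split=> //; apply: ltW.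
by have := Jleast i Ji; rewrite leNgt iy.
Qed.

End Dense.
End Segments.

Theorem proposition5p1 (d : Order.disp_t) (T : orderType d) (z0 : T) :
  dlo_left_endpoint z0 ->
  exists phi : qf_formula,
    forall A : set T, is_fci A -> (holds z0 phi A <-> finite_set A).
Proof.
move=> [dense _ _]; exists (FEq TVar (TL TVar)) => A Afci /=; split.
- by move=> /esym /(Lleft_id_seg_free dense) /(fci_seg_free_finite Afci).
- by move=> /(finite_seg_free dense) /seg_free_Lleft ->.
Qed.
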